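(* Let $(L_n)_{n\in\mathbb N}$ be an integer sequence with $L_n\ge\tilde c\log n$ for some $\tilde c>0$ and all $n$. Then there is a sequence $(\delta_n)$ with $\delta_n\to0$ such that, for all $n$ large enough, with $\mathrm{GW}$-probability at least $1-n^{-2}$ the following holds: for every site $x\in\mathcal Z_{\lceil L_n(1+\delta_n)\rceil}$ there exists a site $y$ on the directed path from the root to $x$ with $|y|\ge L_n$ and $\deg(y)\le\log\log n$.
   Context: $\mu$: offspring distribution on $\mathbb N_0$ with $p_0=0$ and mean $\mathfrak m=\sum_\ell\ell\mu(\ell)\in(1,\infty)$; $\mathrm{GW}$ the law of the Galton--Watson tree with offspring distribution $\mu$, root $o$, edges directed from parent to child; $|y|$ distance to $o$, $\mathcal Z_\ell$ the $\ell$-th generation; $\deg$ the degree in the tree. *)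

From HB Require Import structures.
From mathcomp Require Import all_boot all_order all_algebra.
From mathcomp Require Import all_classical all_reals all_analysis.
Set Implicit Arguments. Unset Strict Implicit. Unset Printing Implicit Defensive.
Import Order.TTheory GRing.Theory Num.Theory.
Import numFieldNormedType.Exports.
Local Open Scope classical_set_scope.
Local Open Scope ring_scope.

Definition offspring_dist (R : realType) (mu : nat -> R) : Prop :=
  (forall l, 0 <= mu l) /\
  series mu @ \oo --> (1 : R) /\
  mu 0%N = 0 /\
  cvgn (series (fun l => l%:R * mu l)) /\
  1 < limn (series (fun l => l%:R * mu l)).

(* Ulam-Harris encoding of the Galton-Watson tree: vertices are words
   u : seq nat; the root o is [::]; xi u w is the number of children of u
   (the children of u are rcons u i, i < xi u w).  *)
Definition in_tree (T : Type) (xi : seq nat -> T -> nat) (w : T) (u : seq nat)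
  : Prop :=
  forall i, (i < size u)%N -> (nth 0%N u i < xi (take i u) w)%N.

(* degree of a vertex in the (undirected) tree: children + parent (if any) *)
Definition tdeg (T : Type) (xi : seq nat -> T -> nat) (w : T) (u : seq nat)
  : nat := (xi u w + (u != [::]))%N.

(* (xi u)_u is an i.i.d. family of N-valued random variables with law mu:
   for every finite list of distinct words and values, the joint
   probability factorizes into the product of mu's. *)
Definition iid_offspring (R : realType) (d : measure_display)
  (T : measurableType d) (P : probability T R) (mu : nat -> R)
  (xi : seq nat -> T -> nat) : Prop :=
  (forall u k, measurable [set w | xi u w = k]) /\
  (forall (us : seq (seq nat)) (ks : seq nat), uniq us -> size ks = size us ->
     P (\bigcap_(i in [set i | (i < size us)%N])
          [set w | xi (nth [::] us i) w = nth 0%N ks i])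
     = (\prod_(i < size us) mu (nth 0%N ks i))%:E).

From HB Require Import structures.
From mathcomp Require Import all_boot all_order all_algebra.
From mathcomp Require Import all_classical all_reals all_analysis.
From mathcomp Require Import zify ring lra.
Set Implicit Arguments. Unset Strict Implicit. Unset Printing Implicit Defensive.
Import Order.TTheory GRing.Theory Num.Theory.
Import numFieldNormedType.Exports.
Local Open Scope classical_set_scope.
Local Open Scope ring_scope.

(* Fix n, write l = L_n, D = ceil (l (1 + delta_n)) and
   theta = ln ln n.  The event fails iff some vertex x at depth D has all
   the vertices of depth l..D on its root path of degree > theta, i.e. with
   k children where k + 1 > theta.  Counting such paths (truncated to vertices with fewer than
   N children, then letting N grow), independence of the offspring numbers
   gives the first-moment bound  P(failure) <= m^l eps_n^(D - l), where m is
   the mean and eps_n = E[xi; xi + 1 > theta] -> 0.  Choosing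
   delta_n = ln (m e^(2/c)) / (- ln eta_n) with eta_n >= eps_n, eta_n -> 0,
   the bound is at most exp (-2 l / c) <= n^-2 since l >= c ln n. *)
Section FirstMoment.
Context (R : realType) (d : measure_display) (T : measurableType d).
Context (P : probability T R) (mu : nat -> R) (xi : seq nat -> T -> nat).

Lemma measure_bigsetU_le (I : Type) (r : seq I) (F : I -> set T) :
  (forall i, measurable (F i)) ->
  (P (\big[setU/set0]_(i <- r) F i) <= \sum_(i <- r) P (F i))%E.
Proof.
move=> mF; elim: r => [|a r IH]; first by rewrite !big_nil measure0.
rewrite !big_cons; apply: le_trans (measureU2 _ _ _) _ => //.
  exact: bigsetU_measurable.
exact: leeD.
Qed.

Definition cyl (us : seq (seq nat)) (ks : seq nat) : set T :=
  [set w | forall i, (i < size us)%N -> xi (nth [::] us i) w = nth 0%N ks i].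

Definition cyl_weight (us : seq (seq nat)) (ks : seq nat) : R :=
  \prod_(i < size us) mu (nth 0%N ks i).

Lemma cyl_cons u us ks :
  cyl (u :: us) ks = [set w | xi u w = head 0%N ks] `&` cyl us (behead ks).
Proof.
apply/seteqP; split=> w /=.
  move=> H; split; first exact: (H 0%N).
  by move=> i ?; rewrite nth_behead; exact: (H i.+1).
by move=> [H1 H2] [|i] /= ?; rewrite ?nth0 // -nth_behead H2.
Qed.

Lemma cyl_weight_cons u us k ks :
  cyl_weight (u :: us) (k :: ks) = mu k * cyl_weight us ks.
Proof. by rewrite /cyl_weight /= big_ord_recl. Qed.

Hypothesis xi_measurable : forall u k, measurable [set w | xi u w = k].

Lemma cyl_measurable us ks : measurable (cyl us ks).
Proof.
elim: us ks => [|u us IH] ks.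
  by rewrite (_ : cyl _ _ = setT) //; apply/seteqP; split.
by rewrite cyl_cons; apply: measurableI.
Qed.

Hypothesis mu_ge0 : forall k, 0 <= mu k.

Lemma cyl_weight_ge0 us ks : 0 <= cyl_weight us ks.
Proof. exact: prodr_ge0. Qed.

(* The bound N makes all unions finite. *)
Fixpoint path_event (ok : nat -> nat -> bool) (N : nat) (u : seq nat)
  (j : nat) {struct j} : set T :=
  \big[setU/set0]_(k < N)
    (if ok (size u) k then [set w | xi u w = k] `&`
       match j with
       | 0 => setT
       | j'.+1 => \big[setU/set0]_(x < k) path_event ok N (rcons u x) j'
       end
     else set0).

Lemma path_event_measurable ok N j u : measurable (path_event ok N u j).
Proof.
elim: j u => [|j IH] u /=; apply: bigsetU_measurable => k _;
  case: ifP => _ //; apply: measurableI => //.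
exact: bigsetU_measurable.
Qed.

Definition outside (u : seq nat) (us : seq (seq nat)) : Prop :=
  forall v, v \in us -> ~~ prefix u v.

Lemma outside_uniq u us : uniq us -> outside u us -> uniq (u :: us).
Proof.
by move=> us_uniq u_out /=; rewrite us_uniq andbT; apply/negP => /u_out;
  rewrite prefix_refl.
Qed.

Lemma outside_child u us x : outside u us -> outside (rcons u x) (u :: us).
Proof.
move=> u_out v; rewrite inE => /orP [/eqP ->|/u_out v_out].
  by apply/negP => /prefixP [s] /(congr1 size); rewrite size_cat size_rcons; lia.
apply: contra v_out => /(prefix_trans _); apply; exact: prefix_rcons.
Qed.

Section PathBound.
Variables (ok : nat -> nat -> bool) (N : nat) (rho : nat -> R).
Hypothesis mu_sum_le1 : forall n, \sum_(k < n) mu k <= 1.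
Hypothesis rho_ge0 : forall i, 0 <= rho i.
Hypothesis rho_bound : forall i n, \sum_(k < n | ok i k) k%:R * mu k <= rho i.
Hypothesis cyl_prob : forall us ks, uniq us -> size ks = size us ->
  P (cyl us ks) = (cyl_weight us ks)%:E.

Definition path_event_bounded (j : nat) : Prop :=
  forall u us ks, uniq us -> size ks = size us -> outside u us ->
  (P (cyl us ks `&` path_event ok N u j) <=
   (cyl_weight us ks * \prod_(t < j) rho (size u + t)%N)%:E)%E.

(* Paths of length 0: the constraint on u costs at most sum_k mu k <= 1. *)
Lemma path_event_bounded0 : path_event_bounded 0.
Proof.
move=> u us ks us_uniq ks_size u_out; rewrite /= big_distrr /=.
apply: le_trans (measure_bigsetU_le _ _) _ => [k|].
  apply: measurableI; first exact: cyl_measurable.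
  by case: ifP => _ //; apply: measurableI.
have term (k : 'I_N) : (P (cyl us ks `&` (if ok (size u) k then
    [set w | xi u w = k] `&` setT else set0)) <= (mu k * cyl_weight us ks)%:E)%E.
  case: ifP => _; last by rewrite setI0 measure0 lee_fin mulr_ge0 ?cyl_weight_ge0.
  rewrite setIT setIC.
  rewrite (_ : _ `&` _ = cyl (u :: us) (nat_of_ord k :: ks)); last first.
    by rewrite cyl_cons.
  by rewrite cyl_prob ?cyl_weight_cons ?outside_uniq //= ks_size.
apply: le_trans (lee_sum _ (fun k _ => term k)) _.
rewrite sumEFin lee_fin -mulr_suml big_ord0 mulr1.
by apply: ler_piMl; [exact: cyl_weight_ge0|exact: mu_sum_le1].
Qed.

(* Induction step: if u has k admissible children, each of the k subtrees
   contributes mu k times the bound for j; summing over k gives rho |u|. *)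
Lemma path_event_boundedS j : path_event_bounded j -> path_event_bounded j.+1.
Proof.
move=> IH u us ks us_uniq ks_size u_out; rewrite /= big_distrr /=.
set W := cyl_weight us ks; set G := \prod_(t < j) rho ((size u).+1 + t)%N.
apply: le_trans (measure_bigsetU_le _ _) _ => [k|].
  apply: measurableI; first exact: cyl_measurable.
  case: ifP => _ //; apply: measurableI => //.
  by apply: bigsetU_measurable => *; exact: path_event_measurable.
have term (k : 'I_N) : (P (cyl us ks `&` (if ok (size u) k then
    [set w | xi u w = k] `&`
      \big[setU/set0]_(x < k) path_event ok N (rcons u x) j else set0)) <=
    ((if ok (size u) k then k%:R * mu k else 0) * W * G)%:E)%E.
  case: ifP => _; last by rewrite setI0 measure0 !mul0r.
  rewrite setIA [cyl us ks `&` _]setIC.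
  rewrite (_ : _ `&` cyl us ks = cyl (u :: us) (nat_of_ord k :: ks)); last first.
    by rewrite cyl_cons.
  rewrite big_distrr /=; apply: le_trans (measure_bigsetU_le _ _) _ => [x|].
    by apply: measurableI; [exact: cyl_measurable|exact: path_event_measurable].
  have child (x : 'I_k) : (P (cyl (u :: us) (nat_of_ord k :: ks) `&`
      path_event ok N (rcons u x) j) <= (mu k * W * G)%:E)%E.
    apply: le_trans (IH _ _ _ _ _ _) _.
    - exact: outside_uniq.
    - by rewrite /= ks_size.
    - exact: outside_child.
    by rewrite cyl_weight_cons size_rcons.
  apply: le_trans (lee_sum _ (fun x _ => child x)) _.
  by rewrite sumEFin lee_fin sumr_const card_ord -[_ *+ k]mulr_natl !mulrA.
apply: le_trans (lee_sum _ (fun k _ => term k)) _.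
rewrite sumEFin lee_fin -!mulr_suml -big_mkcond /=.
have -> : \prod_(t < j.+1) rho (size u + t)%N = rho (size u) * G.
  rewrite big_ord_recl addn0; congr (_ * _).
  by apply: eq_bigr => t _; rewrite /= addSnnS.
rewrite [_ * W]mulrC -mulrA; apply: ler_wpM2l; first exact: cyl_weight_ge0.
by apply: ler_wpM2r; [exact: prodr_ge0|exact: rho_bound].
Qed.

Lemma path_event_bound j : path_event_bounded j.
Proof.
by elim: j => [|j IH]; [exact: path_event_bounded0|exact: path_event_boundedS].
Qed.

End PathBound.

End FirstMoment.

Section PathCharacterization.
Context (d : measure_display) (T : measurableType d) (xi : seq nat -> T -> nat).

Lemma in_bigsetU_ord n (F : 'I_n -> set T) w :
  (\big[setU/set0]_(i < n) F i) w <-> exists i, F i w.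
Proof.
rewrite -bigcup_seq; split=> [[i _ Fi]|[i Fi]]; first by exists i.
by exists i => //=; rewrite mem_index_enum.
Qed.

Definition admissible_path (ok : nat -> nat -> bool) (N : nat) (u y : seq nat)
  (w : T) : Prop :=
  (forall i, (i <= size y)%N ->
     ok (size u + i)%N (xi (u ++ take i y) w) /\ (xi (u ++ take i y) w < N)%N) /\
  (forall i, (i < size y)%N -> (nth 0%N y i < xi (u ++ take i y) w)%N).

Lemma path_eventP ok N j u w :
  path_event xi ok N u j w <->
  exists2 y, size y = j & admissible_path ok N u y w.
Proof.
elim: j u => [|j IH] u /=; rewrite in_bigsetU_ord.
  split=> [[k]|[y /size0nil -> [Hok _]]].
    case: ifP => // ok_k [xi_k _]; exists [::] => //; split=> // i.
    by rewrite leqn0 => /eqP ->; rewrite addn0 cats0 xi_k.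
  have [ok0 ltN] := Hok 0%N isT; rewrite addn0 cats0 in ok0 ltN.
  by exists (Ordinal ltN) => /=; rewrite ok0.
split=> [[k]|[[//|x y] [Hy] [Hok Hch]]].
  case: ifP => // ok_k [xi_k]; rewrite in_bigsetU_ord => -[x].
  move/IH => [y Hy [Hok Hch]]; exists (nat_of_ord x :: y); first by rewrite /= Hy.
  split=> [[|i] Hi|[|i] Hi] /=.
  - by rewrite addn0 cats0 xi_k.
  - by rewrite -cat_rcons addnS -addSn -(size_rcons u x); apply: Hok.
  - by rewrite cats0 xi_k.
  - by rewrite -cat_rcons; apply: Hch.
have [ok0 ltN] := Hok 0%N isT; rewrite addn0 cats0 in ok0 ltN.
have x_lt := Hch 0%N isT; rewrite cats0 /= in x_lt.
exists (Ordinal ltN); rewrite /= ok0; split=> //.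
rewrite in_bigsetU_ord; exists (Ordinal x_lt); apply/IH; exists y => //.
split=> i Hi.
- by have := Hok i.+1 Hi; rewrite /= -cat_rcons size_rcons addnS.
- by have := Hch i.+1 Hi; rewrite /= -cat_rcons.
Qed.

End PathCharacterization.

Section GoodEvent.
Context (R : realType) (d : measure_display) (T : measurableType d).
Context (xi : seq nat -> T -> nat).

Definition high_degree (l : nat) (th : R) (i k : nat) : bool :=
  (l <= i)%N ==> (th < k.+1%:R).

Definition good_event (l D : nat) (th : R) : set T :=
  [set w | forall x : seq nat, in_tree xi w x -> (size x)%:Z = D%:Z ->
    exists k : nat, [/\ (k <= size x)%N, (l%:Z <= k%:Z)%R &
      ((tdeg xi w (take k x))%:R <= th)%R]].

Lemma tdeg_take w x k : (0 < k)%N -> (k <= size x)%N ->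
  tdeg xi w (take k x) = (xi (take k x) w).+1.
Proof.
move=> k_gt0 k_le; rewrite /tdeg -size_eq0 size_takel // -lt0n k_gt0.
exact: addn1.
Qed.

Lemma good_eventE l D th : (0 < l)%N ->
  good_event l D th = ~` \bigcup_N path_event xi (high_degree l th) N [::] D.
Proof.
move=> l_gt0; apply/seteqP; split=> w /=.
  move=> good [N _ /path_eventP [y y_size [Hok Hch]]].
  have [k [k_le l_le deg_le]] := good y Hch (congr1 Posz y_size).
  rewrite lez_nat in l_le.
  have [deg_gt _] := Hok k k_le.
  rewrite /high_degree /= l_le /= in deg_gt.
  rewrite tdeg_take // in deg_le; last exact: leq_trans l_le.
  by move: (lt_le_trans deg_gt deg_le); rewrite ltxx.
move=> no_bad x x_tree /eqP; rewrite eqz_nat => /eqP x_size.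
apply: contrapT => no_good; apply: no_bad.
exists (\max_(i < D.+1) xi (take i x) w).+1 => //.
apply/path_eventP; exists x => //; split=> i i_le; last exact: x_tree.
split; last first.
  have i_lt : (i < D.+1)%N by rewrite ltnS -x_size.
  by rewrite ltnS; apply: (@leq_bigmax_cond _ _ _ (Ordinal i_lt)).
apply/implyP => l_le; rewrite -(tdeg_take w (leq_trans l_gt0 l_le)) //.
rewrite ltNge; apply/negP => deg_le; apply: no_good.
by exists i; split; rewrite ?lez_nat.
Qed.

Lemma path_event_mono ok u j :
  nondecreasing_seq (fun N => path_event xi ok N u j).
Proof.
move=> N M le_NM; apply/subsetPset => w /path_eventP [y y_size [Hok Hch]].
apply/path_eventP; exists y => //; split=> // i i_le.
by have [ok_i lt_N] := Hok i i_le; split=> //; exact: leq_trans le_NM.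
Qed.

End GoodEvent.

Section ProbabilityBound.
Context (R : realType) (d : measure_display) (T : measurableType d).
Context (P : probability T R) (mu : nat -> R) (xi : seq nat -> T -> nat).
Hypothesis xi_iid : iid_offspring P mu xi.
Hypothesis mu_ge0 : forall k, 0 <= mu k.
Hypothesis mu_sum_le1 : forall N, \sum_(k < N) mu k <= 1.
Variables (m eps th : R).
Hypothesis mean_le : forall N, \sum_(k < N) k%:R * mu k <= m.
Hypothesis tail_le : forall N, \sum_(k < N | th < k.+1%:R) k%:R * mu k <= eps.
Hypothesis eps_ge0 : 0 <= eps.

Lemma bad_path_prob l D N : (l <= D)%N ->
  (P (path_event xi (high_degree l th) N [::] D) <=
   (m ^+ l * eps ^+ (D - l))%:E)%E.
Proof.
move=> le_lD; have m_ge0 : 0 <= m by have := mean_le 0; rewrite big_ord0.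
pose rho i := if (l <= i)%N then eps else m.
have rho_ge0 i : 0 <= rho i by rewrite /rho; case: ifP.
have rho_bound i n : \sum_(k < n | high_degree l th i k) k%:R * mu k <= rho i.
  by rewrite /high_degree /rho; case: ifP => _ /=; [exact: tail_le|exact: mean_le].
have cyl_prob us ks : uniq us -> size ks = size us ->
    P (cyl xi us ks) = (cyl_weight mu us ks)%:E.
  exact: (proj2 xi_iid).
have root_out : outside [::] [::] by move=> v; rewrite in_nil.
have := path_event_bound (proj1 xi_iid) mu_ge0 N mu_sum_le1 rho_ge0 rho_bound
  cyl_prob D (isT : uniq [::]) (erefl : size [::] = size [::]) root_out.
rewrite (_ : cyl xi [::] [::] = setT); last by apply/seteqP; split.
rewrite setTI /cyl_weight big_ord0 mul1r => /le_trans; apply; rewrite lee_fin.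
rewrite -(big_mkord xpredT (fun t => rho (0 + t)%N)) (big_cat_nat (leq0n l)) //=.
rewrite (@eq_big_nat _ _ _ 0 l _ (fun _ => m)); last first.
  by move=> i /andP [_ lt_il]; rewrite /rho add0n leqNgt lt_il.
rewrite (@eq_big_nat _ _ _ l D _ (fun _ => eps)); last first.
  by move=> i /andP [le_li _]; rewrite /rho add0n le_li.
by rewrite !prodr_const_nat subn0.
Qed.

(* The good event is the complement of an increasing union of path events,
   each controlled by [bad_path_prob]. *)
Lemma good_event_prob l D : (0 < l)%N -> (l <= D)%N ->
  ((1 - m ^+ l * eps ^+ (D - l))%:E <= P (good_event xi l D th))%E.
Proof.
move=> l_gt0 le_lD; rewrite good_eventE //.
set F := fun N => path_event xi (high_degree l th) N [::] D.
have F_meas N : measurable (F N).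
  by apply: path_event_measurable; exact: (proj1 xi_iid).
have U_meas : measurable (\bigcup_N F N) by exact: bigcup_measurable.
rewrite probability_setC // EFinB; apply: leeB => //.
have F_cvg :=
  nondecreasing_cvg_mu (mu := P) F_meas U_meas (path_event_mono _ _ _ _).
rewrite -(cvg_lim _ F_cvg) //; apply: lime_le.
  by apply/cvg_ex; exists (P (\bigcup_N F N)).
by apply: nearW => N; exact: bad_path_prob.
Qed.

End ProbabilityBound.

Section Asymptotics.
Variable R : realType.

Lemma partial_sum_le_lim (u : R^nat) : (forall k, 0 <= u k) ->
  cvgn (series u) -> forall N, \sum_(k < N) u k <= limn (series u).
Proof.
move=> u_ge0 u_cvg N; rewrite -(big_mkord xpredT).
apply: (nondecreasing_cvgn_le _ u_cvg N).
exact: (@nondecreasing_series _ u xpredT 0%N).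
Qed.

Lemma tail_sum_le (f : nat -> R) (m : R) M : (forall k, 0 <= f k) ->
  (forall N, \sum_(k < N) f k <= m) ->
  forall N, \sum_(k < N | (M <= k)%N) f k <= m - \sum_(k < M) f k.
Proof.
move=> f_ge0 f_le N; have [le_NM|lt_MN] := leqP N M.
  rewrite big_pred0; first by rewrite subr_ge0.
  by move=> k; rewrite leqNgt (leq_trans (ltn_ord k) le_NM).
rewrite (big_ord_widen_cond N xpredT f (ltnW lt_MN)) /=.
rewrite lerBrDr (le_trans _ (f_le N)) //.
rewrite [leRHS](bigID (fun k : 'I_N => (M <= k)%N)) /= lerD2l.
by under eq_bigl => k do rewrite ltnNge.
Qed.

Lemma truncn_lnln_cvg :
  (fun n : nat => Num.truncn (ln (ln (n%:R : R)))) @ \oo --> \oo.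
Proof.
move=> Q [M _ MQ]; exists (Num.truncn (expR (expR (M%:R : R)))).+1 => // n /=.
rewrite truncn_lt_nat ?ltW ?expR_gt0 // => n_gt.
have lnn_gt : expR M%:R < ln (n%:R : R).
  by rewrite -[X in X < _]expRK ltr_ln ?posrE ?expR_gt0 // (lt_trans _ n_gt).
have lnlnn_gt : M%:R < ln (ln (n%:R : R)).
  by rewrite -[X in X < _]expRK ltr_ln ?posrE ?expR_gt0 // (lt_trans _ lnn_gt).
by apply: MQ; rewrite /= truncn_ge_nat ?ltW // (le_lt_trans _ lnlnn_gt).
Qed.

Lemma inv_neg_ln_cvg0 (e : nat -> R) : (forall n, 0 < e n) ->
  e @ \oo --> 0 -> (fun n => (- ln (e n))^-1) @ \oo --> 0.
Proof.
move=> e_gt0 /cvgr0Pnorm_lt e_cvg; apply/cvgr0Pnorm_lt => r r_gt0.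
have := e_cvg (expR (- r^-1)) (expR_gt0 _); apply: filterS => n.
rewrite gtr0_norm // => e_lt.
have ln_lt : ln (e n) < - r^-1 by rewrite -ltr_expR lnK // posrE.
have ln_gt0 : 0 < - ln (e n).
  by rewrite oppr_gt0 (lt_trans ln_lt) // oppr_lt0 invr_gt0.
rewrite gtr0_norm ?invr_gt0 // -[ltRHS]invrK ltf_pV2 ?posrE ?invr_gt0 //.
by rewrite ltrNr.
Qed.

End Asymptotics.

Lemma power_bound (R : realType) (m c eta eps : R) (l t n : nat) :
  1 < m -> 0 < c -> 0 <= eps <= eta -> 0 < eta < 1 -> (0 < n)%N ->
  c * ln (n%:R : R) <= l%:R ->
  l%:R * (ln (m * expR (2 / c)) / - ln eta) <= t%:R ->
  m ^+ l * eps ^+ t <= (n%:R ^+ 2)^-1.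
Proof.
move=> m_gt1 c_gt0 /andP [eps_ge0 eps_le] eta01 n_gt0 l_ge t_ge.
have m_gt0 : 0 < m by exact: lt_trans m_gt1.
have eta_gt0 : 0 < eta by case/andP: eta01.
have ln_eta : 0 < - ln eta by rewrite oppr_gt0 ln_lt0.
have n_pos : 0 < (n%:R : R) by rewrite ltr0n.
move: t_ge; rewrite mulrA ler_pdivrMr // lnM ?posrE ?expR_gt0 // expRK.
rewrite mulrDr => t_ge.
have l_ge' : ln (n%:R : R) * 2 <= l%:R * (2 / c).
  have -> : ln (n%:R : R) * 2 = c * ln n%:R * (2 / c).
    by field; rewrite gt_eqF.
  by apply: ler_wpM2r l_ge; rewrite divr_ge0 // ltW.
apply: (@le_trans _ _ (m ^+ l * eta ^+ t)).
  apply: ler_wpM2l; first by rewrite exprn_ge0 // ltW.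
  apply: lerXn2r => //; rewrite nnegrE //; exact: le_trans eps_ge0 eps_le.
rewrite -(lnK (x := m ^+ l)) ?posrE ?exprn_gt0 //.
rewrite -(lnK (x := eta ^+ t)) ?posrE ?exprn_gt0 //.
rewrite -(lnK (x := (n%:R ^+ 2)^-1)) ?posrE ?invr_gt0 ?exprn_gt0 //.
rewrite -expRD ler_expR lnV ?posrE ?exprn_gt0 // !lnXn // -!(mulr_natr (ln _)).
lra.
Qed.

Section Rates.
Variables (R : realType) (mu : nat -> R) (c : R).

Definition mean : R := limn (series (fun k => k%:R * mu k)).

Definition tail_mean (n : nat) : R :=
  mean - \sum_(k < Num.truncn (ln (ln (n%:R : R)))) k%:R * mu k.

(* A positive perturbation of the tail mean, still tending to 0. *)
Definition eta (n : nat) : R := tail_mean n + n.+1%:R^-1.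

(* The excess depth factor: l delta_n generations of vertices of degree
   > ln ln n are unlikely once eta_n^delta_n <= (m e^(2/c))^-1. *)
Definition delta (n : nat) : R := ln (mean * expR (2 / c)) / - ln (eta n).

Hypothesis mu_ge0 : forall k, 0 <= mu k.
Hypothesis mean_cvg : cvgn (series (fun k => k%:R * mu k)).

Lemma mean_le N : \sum_(k < N) k%:R * mu k <= mean.
Proof.
apply: (@partial_sum_le_lim R (fun k => k%:R * mu k)) mean_cvg N => k.
exact: mulr_ge0.
Qed.

Lemma tail_mean_ge0 n : 0 <= tail_mean n.
Proof. by rewrite subr_ge0 mean_le. Qed.

Lemma tail_mean_le n N :
  \sum_(k < N | ln (ln (n%:R : R)) < k.+1%:R) k%:R * mu k <= tail_mean n.
Proof.
under eq_bigl => k do rewrite -truncn_le_nat.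
apply: (@tail_sum_le R (fun k => k%:R * mu k)) => [k|]; first exact: mulr_ge0.
exact: mean_le.
Qed.

Lemma tail_mean_le_eta n : tail_mean n <= eta n.
Proof. by rewrite lerDl invr_ge0. Qed.

Lemma eta_gt0 n : 0 < eta n.
Proof. by rewrite ltr_wpDl ?tail_mean_ge0 // invr_gt0. Qed.

Lemma tail_mean_cvg0 : tail_mean @ \oo --> 0.
Proof.
have -> : tail_mean = fun n =>
    mean - (series (fun k => k%:R * mu k) \o
            (fun n : nat => Num.truncn (ln (ln (n%:R : R))))) n.
  by apply: funext => n; rewrite /tail_mean /series /= big_mkord.
rewrite -(subrr mean); apply: cvgB; first exact: cvg_cst.
exact: (cvg_comp _ _ (truncn_lnln_cvg R) mean_cvg).
Qed.

Lemma eta_cvg0 : eta @ \oo --> 0.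
Proof.
by rewrite -[0]addr0; apply: cvgD; [exact: tail_mean_cvg0|exact: cvg_harmonic].
Qed.

(* delta_n -> 0 because - ln eta_n -> +oo. *)
Lemma delta_cvg0 : delta @ \oo --> 0.
Proof.
rewrite -(mulr0 (ln (mean * expR (2 / c)))); apply: cvgMr.
exact: inv_neg_ln_cvg0 eta_gt0 eta_cvg0.
Qed.

(* delta_n >= 0 as soon as eta_n < 1, since m e^(2/c) > 1. *)
Lemma delta_ge0 n : 1 < mean -> 0 < c -> eta n < 1 -> 0 <= delta n.
Proof.
move=> mean_gt1 c_gt0 eta_lt1; apply: divr_ge0.
  apply: ln_ge0; rewrite -[1]mulr1; apply: ler_pM; rewrite ?ler01 ?ltW //.
  by rewrite expR_gt1 divr_gt0.
by rewrite oppr_ge0 ltW // ln_lt0 // eta_gt0.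
Qed.

End Rates.

Lemma depth_bounds (R : realType) (Ln : int) (x : R) : 0 < Ln -> 0 <= x ->
  exists l D : nat, [/\ Ln = l%:Z, Num.ceil (Ln%:~R * (1 + x)) = D%:Z,
    (0 < l)%N, (l <= D)%N & l%:R * (1 + x) <= D%:R].
Proof.
move=> Ln_gt0 x_ge0.
have [l Ln_l] : exists l : nat, Ln = l%:Z by exists `|Ln|%N; rewrite gez0_abs ?ltW.
rewrite Ln_l in Ln_gt0 *.
have y_le := Num.Theory.ceil_ge (l%:~R * (1 + x) : R).
have ceil_ge0 : 0 <= Num.ceil (l%:~R * (1 + x) : R).
  by rewrite -(ler0z R) (le_trans _ y_le) // mulr_ge0 // addr_ge0.
have [D ceil_D] : exists D : nat, Num.ceil (l%:~R * (1 + x) : R) = D%:Z.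
  by exists `|Num.ceil (l%:~R * (1 + x) : R)|%N; rewrite gez0_abs.
rewrite ceil_D in y_le *.
have l_le : l%:R * (1 + x) <= D%:R by move: y_le; rewrite !pmulrn.
exists l, D; split=> //.
rewrite -(ler_nat R) (le_trans _ l_le) //.
by apply: ler_peMr; rewrite ?ler0n ?lerDl.
Qed.

Unset Implicit Arguments.

Theorem mainTheorem14 (R : realType) (mu : nat -> R) (L : nat -> int) (c : R) :
  offspring_dist mu ->
  0 < c -> (forall n : nat, (0 < n)%N -> c * ln (n%:R : R) <= (L n)%:~R) ->
  exists delta : nat -> R,
    delta @ \oo --> (0 : R) /\
    \forall n \near \oo,
      forall (d : measure_display) (T : measurableType d)
        (P : probability T R) (xi : seq nat -> T -> nat),
      iid_offspring P mu xi ->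
      ((1 - (n%:R ^+ 2)^-1)%:E <=
       P [set w | forall x : seq nat, in_tree xi w x ->
            (size x)%:Z = Num.ceil ((L n)%:~R * (1 + delta n)) ->
            exists k : nat, [/\ (k <= size x)%N, (L n <= k%:Z)%R &
              ((tdeg xi w (take k x))%:R <= ln (ln (n%:R : R)))%R]])%E.
Proof.
move=> [mu_ge0 [mu_sum1 [_ [mean_cvg mean_gt1]]]] c_gt0 L_ge.
have mu_sum_le1 N : \sum_(k < N) mu k <= 1.
  by rewrite -(cvg_lim _ mu_sum1) //; exact: partial_sum_le_lim (cvgP _ mu_sum1) N.
exists (delta mu c); split; first exact: delta_cvg0.
have eta_lt1 : \forall n \near \oo, eta mu n < 1.
  have /cvgr0Pnorm_lt/(_ 1 ltr01) := eta_cvg0 mean_cvg.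
  by apply: filterS => n; rewrite gtr0_norm // eta_gt0.
near=> n => d T P xi xi_iid.
have n_gt1 : (1 < n)%N by near: n; exists 2%N.
have L_ge_n := L_ge n (ltnW n_gt1).
have L_gt0 : 0 < L n.
  by rewrite -(ltr0z R) (lt_le_trans _ L_ge_n) // mulr_gt0 // ln_gt0 // ltr1n.
have delta_ge0 : 0 <= delta mu c n by apply: delta_ge0 => //; near: n.
have [l [D [L_l -> l_gt0 le_lD lD]]] := depth_bounds L_gt0 delta_ge0.
rewrite L_l in L_ge_n *.
apply: le_trans (good_event_prob xi_iid mu_ge0 mu_sum_le1 (mean_le mu_ge0 mean_cvg)
  (tail_mean_le mu_ge0 mean_cvg n) (tail_mean_ge0 mu_ge0 mean_cvg n) l_gt0 le_lD).
rewrite lee_fin lerD2l lerN2; apply: (power_bound (c := c) (eta := eta mu n)) => //.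
- by rewrite tail_mean_ge0 // tail_mean_le_eta.
- by rewrite eta_gt0 //; near: n.
- exact: ltnW.
- by rewrite (natrB R le_lD) lerBrDl -[X in X + _]mulr1 -mulrDr.
Unshelve. all: by end_near.
Qed.
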